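(* Let $a<b$ and let $f:[a,b]\to\mathbb{R}$ be continuous. Then there exists $\eta\in(a,b)$ such that $$f(\eta)=\frac{1}{\eta-a}\int_a^\eta f(t)\,\mathrm{d}t+\frac{\eta-a}{2}\cdot\frac{f(b)-f(a)}{b-a}.$$ *)

From Stdlib Require Import Reals.
From Coquelicot Require Import Coquelicot.
Open Scope R_scope.

Definition continuous_on_closed (f : R -> R) (a b : R) : Prop :=
  forall x, a <= x <= b ->
    filterlim f (within (fun y => a <= y <= b) (locally x)) (locally (f x)).

(* Flett's mean value theorem: if w' (a) = w' (b), the tangent to the graph of
   w at some interior point eta passes through (a, w a), that is
   w eta - w a = w' eta (eta - a).  Normalising w a = w' a = w' b = 0, suppose
   psi x := w' x (x - a) - w x has no interior zero; by continuity it then has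
   constant sign, say positive.  Since psi = (x - a)^2 (w x / (x - a))', the
   slope m x := w x / (x - a) is strictly increasing on (a, b], and m b <= 0
   because psi b = - w b >= 0.  Yet m x = w' c for some c in (a, x) by the mean
   value theorem, so m x -> w' a = 0 as x -> a: a contradiction.

   The theorem is Flett's theorem for w x := RInt f a x - k (x - a)^2 / 2 with
   k the slope of the chord of f, after extending f continuously beyond [a, b]. *)

From Stdlib Require Import Reals Lra Classical.
From Coquelicot Require Import Coquelicot.
Open Scope R_scope.

Lemma continuity_no_root_pos (p : R -> R) (a b x0 : R) :
  continuity p -> (forall x, a < x < b -> p x <> 0) ->
  a < x0 < b -> 0 < p x0 -> forall x, a < x < b -> 0 < p x.
Proof.
  intros Hp Hroot Hx0 Hpx0 x Hx.
  destruct (Rlt_or_le 0 (p x)) as [Hpos | Hnpos]; [exact Hpos | exfalso].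
  assert (Hneg : p x < 0) by (specialize (Hroot x Hx); lra).
  destruct (Rtotal_order x x0) as [Hlt | [Heq | Hgt]].
  - destruct (IVT p x x0 Hp Hlt Hneg Hpx0) as [z [Hz Hpz]].
    apply (Hroot z); [lra | exact Hpz].
  - subst; lra.
  - destruct (IVT (fun t => - p t) x0 x (continuity_opp _ Hp) Hgt)
      as [z [Hz Hpz]]; [lra | lra |].
    apply (Hroot z); lra.
Qed.

Lemma continuity_no_root_sign (p : R -> R) (a b : R) :
  continuity p -> (forall x, a < x < b -> p x <> 0) ->
  (forall x, a < x < b -> 0 < p x) \/ (forall x, a < x < b -> p x < 0).
Proof.
  intros Hp Hroot.
  destruct (Rlt_or_le a b) as [Hab | Hba]; [| left; intros; lra].
  set (x0 := (a + b) / 2).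
  assert (Hx0 : a < x0 < b) by (unfold x0; lra).
  destruct (Rlt_or_le 0 (p x0)) as [Hpos | Hnpos].
  - left; exact (continuity_no_root_pos p a b x0 Hp Hroot Hx0 Hpos).
  - right; intros x Hx.
    assert (Hopp : forall y, a < y < b -> 0 < - p y).
    { apply (continuity_no_root_pos (fun t => - p t) a b x0 (continuity_opp _ Hp));
        [intros y Hy Hpy; apply (Hroot y Hy); lra | exact Hx0 |].
      specialize (Hroot x0 Hx0); lra. }
    specialize (Hopp x Hx); lra.
Qed.

Lemma continuity_pos_endpoint_nonneg (p : R -> R) (a b : R) :
  continuity p -> a < b -> (forall x, a < x < b -> 0 < p x) -> 0 <= p b.
Proof.
  intros Hp Hab Hpos.
  destruct (Rle_or_lt 0 (p b)) as [Hnneg | Hneg]; [exact Hnneg | exfalso].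
  set (x0 := (a + b) / 2).
  assert (Hx0 : a < x0 < b) by (unfold x0; lra).
  destruct (IVT (fun t => - p t) x0 b (continuity_opp _ Hp))
    as [z [Hz Hpz]]; [lra | specialize (Hpos x0 Hx0); lra | lra |].
  assert (Hzb : z <> b) by (intros ->; lra).
  specialize (Hpos z ltac:(lra)); lra.
Qed.

Section FlettNormalized.

Variables (w dw : R -> R) (a b : R).
Hypothesis hab : a < b.
Hypothesis w_deriv : forall x, is_derive w x (dw x).
Hypothesis dw_cont : forall x, continuous dw x.
Hypothesis w_a : w a = 0.
Hypothesis dw_a : dw a = 0.
Hypothesis dw_b : dw b = 0.

Let tangent_gap x := dw x * (x - a) - w x.
Let slope x := w x / (x - a).

Lemma continuity_tangent_gap : continuity tangent_gap.
Proof.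
  intro x; apply continuity_pt_filterlim; unfold tangent_gap.
  apply (continuous_minus (fun x => dw x * (x - a)) w).
  - apply (continuous_mult dw (fun x => x - a)); [apply dw_cont |].
    apply (continuous_minus (fun x => x) (fun _ => a));
      [apply continuous_id | apply continuous_const].
  - apply ex_derive_continuous; exists (dw x); apply w_deriv.
Qed.

Lemma is_derive_slope c : c <> a -> is_derive slope c (tangent_gap c / (c - a) ^ 2).
Proof.
  intro Hca.
  assert (Hlin : is_derive (fun t => t - a) c 1).
  { auto_derive; [exact I | ring]. }
  assert (H := is_derive_div w (fun t => t - a) c _ _ (w_deriv c) Hlin
                 ltac:(lra)).
  replace (tangent_gap c / (c - a) ^ 2)
    with ((dw c * (c - a) - w c * 1) / (c - a) ^ 2)
    by (unfold tangent_gap; field; lra).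
  exact H.
Qed.

Section PositiveGap.

Hypothesis gap_pos : forall x, a < x < b -> 0 < tangent_gap x.

Lemma slope_increasing x y : a < x < y -> y <= b -> slope x < slope y.
Proof.
  intros Hxy Hy.
  destruct (MVT_cor2 slope (fun t => tangent_gap t / (t - a) ^ 2) x y)
    as [c [Hc Hcxy]]; [lra | |].
  - intros c Hc; apply is_derive_Reals, is_derive_slope; lra.
  - assert (Hder : 0 < tangent_gap c / (c - a) ^ 2).
    { apply Rdiv_lt_0_compat; [apply gap_pos; lra | apply pow_lt; lra]. }
    assert (0 < tangent_gap c / (c - a) ^ 2 * (y - x))
      by (apply Rmult_lt_0_compat; lra).
    lra.
Qed.

Lemma slope_b_nonpos : slope b <= 0.
Proof.
  assert (Hgap_b : 0 <= tangent_gap b)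
    by exact (continuity_pos_endpoint_nonneg _ a b continuity_tangent_gap
                hab gap_pos).
  unfold tangent_gap in Hgap_b; rewrite dw_b in Hgap_b.
  unfold slope, Rdiv.
  assert (0 < / (b - a)) by (apply Rinv_0_lt_compat; lra).
  nra.
Qed.

Lemma slope_near_a_small (eps : posreal) (x0 : R) :
  a < x0 -> exists x, a < x < x0 /\ Rabs (slope x) < eps.
Proof.
  intro Hx0.
  destruct (proj1 (filterlim_locally dw (dw a)) (dw_cont a) eps) as [delta Hdelta].
  set (x := a + Rmin delta (x0 - a) / 2).
  assert (Hmin : 0 < Rmin delta (x0 - a) <= delta /\ Rmin delta (x0 - a) <= x0 - a).
  { split; [split |]; [apply Rmin_glb_lt; [apply cond_pos | lra] |
                       apply Rmin_l | apply Rmin_r]. }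
  assert (Hx : a < x < x0) by (unfold x; lra).
  exists x; split; [exact Hx |].
  destruct (MVT_cor2 w dw a x) as [c [Hc Hcx]];
    [lra | intros; apply is_derive_Reals, w_deriv |].
  assert (Hslope : slope x = dw c) by (unfold slope; replace (w x) with (dw c * (x - a)) by lra; field; lra).
  rewrite Hslope.
  assert (Hball : ball a delta c).
  { change (Rabs (c - a) < delta); rewrite Rabs_right by lra; unfold x in Hcx; lra. }
  specialize (Hdelta c Hball); change (Rabs (dw c - dw a) < eps) in Hdelta.
  rewrite dw_a, Rminus_0_r in Hdelta; exact Hdelta.
Qed.

Lemma positive_gap_absurd : False.
Proof.
  set (x0 := (a + b) / 2).
  assert (Hx0 : a < x0 < b) by (unfold x0; lra).
  assert (Hx0b : slope x0 < slope b) by (apply slope_increasing; lra).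
  assert (Hneg : 0 < - slope x0) by (pose proof slope_b_nonpos; lra).
  destruct (slope_near_a_small (mkposreal _ Hneg) x0 ltac:(lra))
    as [x [Hx Hsmall]]; simpl in Hsmall.
  assert (Hxx0 : slope x < slope x0) by (apply slope_increasing; lra).
  pose proof (Rle_abs (- slope x)); rewrite Rabs_Ropp in *; lra.
Qed.

End PositiveGap.

End FlettNormalized.

Lemma flett_normalized (w dw : R -> R) (a b : R) :
  a < b -> (forall x, is_derive w x (dw x)) -> (forall x, continuous dw x) ->
  w a = 0 -> dw a = 0 -> dw b = 0 ->
  exists eta, a < eta < b /\ w eta = dw eta * (eta - a).
Proof.
  intros hab w_deriv dw_cont w_a dw_a dw_b.
  destruct (classic (exists eta, a < eta < b /\ w eta = dw eta * (eta - a)))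
    as [Hex | Hnex]; [exact Hex | exfalso].
  assert (Hroot : forall x, a < x < b -> dw x * (x - a) - w x <> 0).
  { intros x Hx Hgap; apply Hnex; exists x; split; [exact Hx | lra]. }
  destruct (continuity_no_root_sign _ a b
              (continuity_tangent_gap w dw a w_deriv dw_cont) Hroot)
    as [Hpos | Hneg].
  - exact (positive_gap_absurd w dw a b hab w_deriv dw_cont w_a dw_a dw_b Hpos).
  - apply (positive_gap_absurd (fun x => - w x) (fun x => - dw x) a b hab).
    + intro x; apply (is_derive_opp w x (dw x)), w_deriv.
    + intro x; apply (continuous_opp dw), dw_cont.
    + rewrite w_a; ring.
    + rewrite dw_a; ring.
    + rewrite dw_b; ring.
    + intros x Hx; specialize (Hneg x Hx); lra.
Qed.

Theorem flett (w dw : R -> R) (a b : R) :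
  a < b -> (forall x, is_derive w x (dw x)) -> (forall x, continuous dw x) ->
  dw a = dw b ->
  exists eta, a < eta < b /\ w eta - w a = dw eta * (eta - a).
Proof.
  intros hab w_deriv dw_cont dw_ab.
  destruct (flett_normalized (fun x => w x - w a - dw a * (x - a))
              (fun x => dw x - dw a) a b hab) as [eta [Heta Hflett]].
  - intro x.
    assert (Haff : is_derive (fun x => w a + dw a * (x - a)) x (dw a))
      by (auto_derive; [exact I | ring]).
    eapply is_derive_ext; [| exact (is_derive_minus _ _ x _ _ (w_deriv x) Haff)].
    intro t; simpl; unfold minus, plus, opp; simpl; ring.
  - intro x; apply (continuous_minus dw (fun _ => dw a));
      [apply dw_cont | apply continuous_const].
  - ring.
  - ring.
  - rewrite dw_ab; ring.
  - exists eta; split; [exact Heta | lra].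
Qed.

Definition clamp (a b x : R) : R := Rmax a (Rmin x b).

Lemma clamp_in_range a b x : a <= b -> a <= clamp a b x <= b.
Proof. intro Hab; unfold clamp, Rmax, Rmin; repeat destruct Rle_dec; lra. Qed.

Lemma clamp_id a b x : a <= x <= b -> clamp a b x = x.
Proof. intro Hx; unfold clamp, Rmax, Rmin; repeat destruct Rle_dec; lra. Qed.

Lemma clamp_lipschitz a b x y : Rabs (clamp a b y - clamp a b x) <= Rabs (y - x).
Proof.
  unfold clamp, Rmax, Rmin; repeat destruct Rle_dec;
    unfold Rabs; repeat destruct Rcase_abs; lra.
Qed.

Lemma continuous_clamp_extension (f : R -> R) (a b : R) :
  a <= b -> continuous_on_closed f a b ->
  forall x, continuous (fun x => f (clamp a b x)) x.
Proof.
  intros Hab hf x.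
  apply (filterlim_comp _ _ _ (clamp a b) f (locally x)
           (within (fun y => a <= y <= b) (locally (clamp a b x))));
    [| apply hf, clamp_in_range, Hab].
  intros P [eps Heps]; exists eps; intros y Hy.
  apply Heps; [| apply clamp_in_range, Hab].
  change (Rabs (clamp a b y - clamp a b x) < eps).
  eapply Rle_lt_trans; [apply clamp_lipschitz | exact Hy].
Qed.

Lemma is_derive_RInt_continuous (g : R -> R) (a x : R) :
  (forall y, continuous g y) -> is_derive (fun y => RInt g a y) x (g x).
Proof.
  intro Hg; apply (is_derive_RInt g _ a x); [| apply Hg].
  apply filter_forall; intro y.
  apply (@RInt_correct R_CompleteNormedModule),
        (@ex_RInt_continuous R_CompleteNormedModule); intros; apply Hg.
Qed.

Theorem mainTheorem5 (a b : R) (f : R -> R)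
  (hab : a < b) (hf : continuous_on_closed f a b) :
  exists eta, a < eta < b /\
    f eta = / (eta - a) * RInt f a eta
            + (eta - a) / 2 * ((f b - f a) / (b - a)).
Proof.
  set (g x := f (clamp a b x)).
  assert (Hg : forall x, continuous g x)
    by (apply continuous_clamp_extension; [lra | exact hf]).
  assert (Hfg : forall x, a <= x <= b -> g x = f x)
    by (intros x Hx; unfold g; rewrite clamp_id by exact Hx; reflexivity).
  set (k := (f b - f a) / (b - a)).
  destruct (flett (fun x => RInt g a x - k * (x - a) ^ 2 / 2)
                  (fun x => g x - k * (x - a)) a b hab) as [eta [Heta Hflett]].
  - intro x.
    assert (Hquad : is_derive (fun x => k * (x - a) ^ 2 / 2) x (k * (x - a)))
      by (auto_derive; [exact I | field]).
    exact (is_derive_minus _ _ x _ _ (is_derive_RInt_continuous g a x Hg) Hquad).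
  - intro x; apply (continuous_minus g (fun x => k * (x - a))); [apply Hg |].
    apply (continuous_scal_r k (fun x => x - a)).
    apply (continuous_minus (fun x => x) (fun _ => a));
      [apply continuous_id | apply continuous_const].
  - rewrite !Hfg by lra; unfold k; field; lra.
  - exists eta; split; [exact Heta |].
    assert (HRInt : RInt g a eta = RInt f a eta).
    { apply RInt_ext; intros x Hx; apply Hfg.
      rewrite Rmin_left in Hx by lra; rewrite Rmax_right in Hx by lra; lra. }
    simpl in Hflett; rewrite RInt_point, HRInt, Hfg in Hflett by lra.
    unfold zero in Hflett; simpl in Hflett.
    assert (Hint : RInt f a eta = f eta * (eta - a) - k * (eta - a) ^ 2 / 2) by lra.
    rewrite Hint; fold k; field; lra.
Qed.
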